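(* Let $(Q,\infty)$, $\alpha$, $\beta$, $\bar\zeta$, $\mathcal C$, $0\in I$ be as in the context, let $d\ge1$ be an integer with $d\beta_i\le\alpha_i$ for all $i\in I$, let $\zeta\in\mathcal C$, and let $\zeta^\sharp$ and $U$ be as in the context. Then a representation $\rho_\sharp$ of $Q^\sharp$ on $U$ is $\zeta^\sharp$-stable if and only if it is $\bar\zeta$-semistable and every sub-representation $S\subseteq U$ with $\sum_{i\in I}\bar\zeta_i\dim S_i=0$ and $S_{\infty'}=\mathbb C$ equals $U$.
   Context: A framed quiver is a quiver with relations $Q=(Q_0,Q_1,Q_2)$ (arrows $a$ from $\mathrm{out}(a)$ to $\mathrm{in}(a)$; each relation $l\in Q_2$ a linear combination of paths with common beginning $\mathrm{out}(l)$ and ending $\mathrm{in}(l)$) together with a vertex $\infty\in Q_0$; $I=Q_0\setminus\{\infty\}$ and $\mathrm{out}(l),\mathrm{in}(l)\in I$ for all $l$. Fix $\alpha\in\mathbb Z_{\ge0}^{Q_0}$ with $\alpha_\infty=1$. Walls are the hyperplanes $(\beta')^\perp=\{\zeta\in\mathbb R^I\mid\sum_i\zeta_i\beta'_i=0\}$ for $\beta'\in\mathbb Z_{\ge0}^I\setminus\{0\}$ with $\beta'_i\le\alpha_i$ for all $i$; chambers are the connected components of the complement of the union of walls. Fix such a $\beta$ and $\bar\zeta\in\beta^\perp$ lying on no wall other than $\beta^\perp$; let $\mathcal C$ be the chamber whose closure contains $\bar\zeta$ and on which $\sum_i\zeta_i\beta_i<0$. Fix $0\in I$ with $\beta_0\neq0$.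 The quiver $Q^\sharp$ has vertices $Q_0\sqcup\{\infty'\}$, arrows $Q_1$ plus one new arrow $\infty'\to0$, and relations $Q_2$. Let $U=\bigoplus_{v\in Q_0\sqcup\{\infty'\}}U_v$ with $\dim U_i=d\beta_i$ ($i\in I$), $U_\infty=0$, $U_{\infty'}=\mathbb C$. Define $\zeta^\sharp$ by $\zeta^\sharp_i=\zeta_i$ ($i\in I$), $\zeta^\sharp_\infty=0$, $\zeta^\sharp_{\infty'}=-\sum_{i\in I}\zeta_i d\beta_i$. A representation of $Q^\sharp$ on $U$ is $\zeta^\sharp$-stable if every sub-representation $S$ (graded subspace stable under all arrow maps) with $0\ne S\ne U$ satisfies $\sum_v\zeta^\sharp_v\dim S_v<0$. It is $\bar\zeta$-semistable if every sub-representation $S$ satisfies $\sum_{i\in I}\bar\zeta_i\dim S_i\le0$. *)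

From HB Require Import structures.
From mathcomp Require Import all_boot all_order all_algebra.
From mathcomp Require Import complex.
From mathcomp Require Import all_classical all_reals all_analysis.
Import numFieldNormedType.Exports.

Set Implicit Arguments.
Unset Strict Implicit.
Unset Printing Implicit Defensive.

Import Order.TTheory GRing.Theory Num.Theory.
Local Open Scope ring_scope.

(* Linear maps act on row vectors: the map of a is x |-> x *m rho a, so a   *)
(* path [:: a1; a2; ..; ak] (first a1, then a2, ...) is evaluated as        *)
(* rho a1 *m rho a2 *m ... *m rho ak.                                        *)
(* A graded subspace S is given by matrices S v whose row spaces are S_v;   *)
Section QuiverReps.
Variables (K : fieldType) (V A : finType) (src tgt : A -> V) (n : V -> nat).

Definition qrep := forall a : A, 'M[K]_(n (src a), n (tgt a)).

Fixpoint pend (v : V) (p : seq A) : V :=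
  if p is a :: p' then pend (tgt a) p' else v.

Fixpoint is_path (v : V) (p : seq A) : bool :=
  if p is a :: p' then (src a == v) && is_path (tgt a) p' else true.

(* evaluation of a path starting at v (meaningful when is_path v p) *)
Fixpoint peval (rho : qrep) (v : V) (p : seq A) : 'M[K]_(n v, n (pend v p)) :=
  if p is a :: p' return 'M[K]_(n v, n (pend v p)) then
    conform_mx 0 (rho a *m peval rho (tgt a) p')
  else 1%:M.

Record qrel := QRel { rsrc : V; rtgt : V; rterms : seq (K * seq A) }.

Definition qrel_wf (l : qrel) : bool :=
  all (fun t => is_path (rsrc l) t.2 && (pend (rsrc l) t.2 == rtgt l)) (rterms l).

Definition rep_sat (rho : qrep) (l : qrel) : Prop :=
  \sum_(t <- rterms l) t.1 *: (conform_mx 0 (peval rho (rsrc l) t.2)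
                                : 'M[K]_(n (rsrc l), n (rtgt l))) = 0.

Definition subrep (rho : qrep) (S : forall v : V, 'M[K]_(n v)) : Prop :=
  forall a : A, (S (src a) *m rho a <= S (tgt a))%MS.

Definition is_zero_sub (S : forall v : V, 'M[K]_(n v)) : Prop :=
  forall v, S v = 0.

Definition is_full_sub (S : forall v : V, 'M[K]_(n v)) : Prop :=
  forall v, row_full (S v).

End QuiverReps.

(* Framed quivers: Q_0 = option I, with None the framing vertex oo.         *)
Record framed_rel (K : Type) (I A : Type) :=
  FRel { fr_src : I; fr_tgt : I; fr_terms : seq (K * seq A) }.

Definition framed_rel_lift (K : fieldType) (I A : finType) (l : framed_rel K I A)
  : qrel K (option I) A := QRel (Some (fr_src l)) (Some (fr_tgt l)) (fr_terms l).

(* The quiver Q^sharp: vertices option (option I), with None = oo' and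
   Some None = oo; arrows option A, with None the new arrow oo' -> i0.     *)
Section Sharp.
Variables (I A : finType) (src tgt : A -> option I) (i0 : I).

Definition sh_src (a : option A) : option (option I) :=
  if a is Some a' then Some (src a') else None.
Definition sh_tgt (a : option A) : option (option I) :=
  if a is Some a' then Some (tgt a') else Some (Some i0).

Definition sh_path (p : seq A) : seq (option A) := map Some p.

Definition framed_rel_sharp (K : fieldType) (l : framed_rel K I A)
  : qrel K (option (option I)) (option A) :=
  QRel (Some (Some (fr_src l))) (Some (Some (fr_tgt l)))
       (map (fun t => (t.1, sh_path t.2)) (fr_terms l)).
End Sharp.

(* dimension vector of U: dim U_i = d beta_i, U_oo = 0, U_oo' = C *)
Definition dimU (I : finType) (d : nat) (beta : I -> nat) (v : option (option I)) : nat :=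
  match v with
  | None => 1%N
  | Some None => 0%N
  | Some (Some i) => (d * beta i)%N
  end.

Section Walls.
Variables (R : realType) (I : finType).

Definition pairing (z : I -> R) (b : I -> nat) : R := \sum_i z i * (b i)%:R.

Definition wall_vec (alpha : option I -> nat) (b : I -> nat) : Prop :=
  (exists i, b i != 0%N) /\ (forall i, (b i <= alpha (Some i))%N).

Definition wall (b : I -> nat) : set {ptws I -> R} := [set z | pairing z b = 0].

Definition off_walls (alpha : option I -> nat) : set {ptws I -> R} :=
  [set z | forall b, wall_vec alpha b -> ~ wall b z].

Definition is_chamber (alpha : option I -> nat) (C : set {ptws I -> R}) : Prop :=
  exists2 z, off_walls alpha z & C = connected_component (off_walls alpha) z.

Definition chamber_C (alpha : option I -> nat) (beta : I -> nat)
  (zetabar : {ptws I -> R}) (C : set {ptws I -> R}) : Prop :=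
  [/\ is_chamber alpha C, closure C zetabar & forall z, C z -> pairing z beta < 0].

Definition zeta_sharp (d : nat) (beta : I -> nat) (zeta : I -> R)
  (v : option (option I)) : R :=
  match v with
  | None => - \sum_i zeta i * (d * beta i)%:R
  | Some None => 0
  | Some (Some i) => zeta i
  end.
End Walls.

From HB Require Import structures.
From mathcomp Require Import all_boot all_order all_algebra.
From mathcomp Require Import complex.
From mathcomp Require Import all_classical all_reals all_analysis.
Import numFieldNormedType.Exports.
Import Order.TTheory GRing.Theory Num.Theory.
Local Open Scope ring_scope.

(* For a sub-representation S of U put s = (dim S_i)_i.  As dim U_oo' = 1,
   either S_oo' = 0 and the zeta^sharp-weight of S is zeta.s, or S_oo' = C and
   it is -zeta.(d beta - s).  Both s and d beta - s are bounded by alpha, so when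
   nonzero they are wall vectors, and for a wall vector b we have zeta.b < 0 iff
   zetabar.b <= 0: off beta^perp this is the constancy of signs on the chamber C
   whose closure contains zetabar, and on beta^perp (the only wall through
   zetabar) both sides hold.  With zetabar.beta = 0 the first case becomes
   zetabar-semistability and the second the condition on S with S_oo' = C. *)

Set Implicit Arguments.
Unset Strict Implicit.
Unset Printing Implicit Defensive.

Lemma sum_option (T : finType) (M : nmodType) (F : option T -> M) :
  \sum_v F v = F None + \sum_t F (Some t).
Proof.
rewrite (bigD1 None) //= (reindex_omap Some id) //=; last by case.
by congr (_ + _); apply: eq_bigl => t; rewrite eqxx.
Qed.

Lemma col1_eq0_or_row_full (K : fieldType) m (A : 'M[K]_(m, 1)) :
  A = 0 \/ row_full A.
Proof.
have [|A_neq0] := eqVneq A 0; [left | right] => //.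
by rewrite /row_full eqn_leq rank_leq_col lt0n mxrank_eq0.
Qed.

Section Pairing.
Variables (R : realType) (I : finType).
Implicit Types (z y : {ptws I -> R}) (b c : I -> nat).

Lemma continuous_pairing b : continuous (fun z : {ptws I -> R} => pairing z b).
Proof.
move=> z; rewrite /pairing.
have := @cvg_big _ _ +%R 0 xpredT (fun x => add_continuous x) _ (nbhs z)
  (index_enum I) (fun i (x : {ptws I -> R}) => x i * (b i)%:R).
by apply=> // i _; apply: cvgMr_tmp; exact: (@proj_continuous I (fun=> R) i z).
Qed.

Lemma pairing_natM z k c : pairing z (fun i => k * c i)%N = k%:R * pairing z c.
Proof.
by rewrite /pairing mulr_sumr; apply: eq_bigr => i _; rewrite natrM mulrCA.
Qed.

Lemma pairing_subn z b c : (forall i, b i <= c i)%N ->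
  pairing z (fun i => c i - b i)%N = pairing z c - pairing z b.
Proof.
by move=> bc; rewrite /pairing -sumrB; apply: eq_bigr => i _; rewrite natrB ?mulrBr.
Qed.

Lemma pairing_delta j c : pairing (fun k => (k == j)%:R : R) c = (c j)%:R.
Proof.
rewrite /pairing (bigD1 j) //= eqxx mul1r big1 ?addr0 // => k /negbTE ->.
by rewrite mul0r.
Qed.

Lemma pairing_sub_delta y t j c :
  pairing (fun k => y k - t * (k == j)%:R) c = pairing y c - t * (c j)%:R.
Proof.
rewrite -pairing_delta /pairing mulr_sumr -sumrB.
by apply: eq_bigr => k _; rewrite mulrBl mulrA.
Qed.

Lemma wall_eq_pairing_proportional b c j y :
  wall (R:=R) b = wall c -> c j != 0%N ->
  pairing y b * (c j)%:R = pairing y c * (b j)%:R.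
Proof.
(* Move y along the j-th axis onto c^perp = b^perp. *)
move=> bc cj; have cj0 : (c j)%:R != 0 :> R by rewrite pnatr_eq0.
pose t := pairing y c / (c j)%:R.
have : wall c (fun k => y k - t * (k == j)%:R).
  by rewrite /wall /= pairing_sub_delta mulfVK ?subrr.
rewrite -bc /wall /= pairing_sub_delta => /eqP; rewrite subr_eq0 => /eqP ->.
by rewrite mulrAC mulfVK.
Qed.

Lemma wall_eq_pairing_lt0 b c j z : wall (R:=R) b = wall c ->
  (exists i, b i != 0%N) -> c j != 0%N -> pairing z c < 0 -> pairing z b < 0.
Proof.
move=> bc [i bi] cj zc.
have cj_gt0 : (0 : R) < (c j)%:R by rewrite ltr0n lt0n.
have bj_gt0 : (0 : R) < (b j)%:R.
  have := wall_eq_pairing_proportional (fun k => (k == i)%:R) bc cj.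
  rewrite !pairing_delta -!natrM => /eqP; rewrite eqr_nat => /eqP bcij.
  rewrite ltr0n lt0n; apply: contraNneq bi => bj0.
  by move: bcij; rewrite bj0 muln0 => /eqP; rewrite muln_eq0 (negbTE cj) orbF.
by rewrite -(pmulr_llt0 _ cj_gt0) wall_eq_pairing_proportional // pmulr_llt0.
Qed.

End Pairing.

Lemma le0_closure (R : realType) (T : topologicalType) (f : T -> R) (A : set T) x :
  continuous f -> (forall y, A y -> f y <= 0) -> closure A x -> f x <= 0.
Proof.
move=> f_cont A_le0 clAx.
have /closure_id f_le0_closed : closed (f @^-1` [set r : R | r <= 0]).
  by apply: preimage_closed => [y _|]; [exact: f_cont | exact: closed_le].
by move: (closureS A_le0 clAx); rewrite -f_le0_closed.
Qed.

Section Chamber.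
Variables (R : realType) (I : finType) (alpha : option I -> nat).
Variable C : set {ptws I -> R}.
Hypothesis chamberC : is_chamber alpha C.
Implicit Types (z : {ptws I -> R}) (b : I -> nat).

Lemma chamber_pairing_neq0 b z : wall_vec alpha b -> C z -> pairing z b != 0.
Proof.
case: chamberC => w _ -> b_wall /connected_component_sub z_off.
by apply/eqP; exact: z_off b_wall.
Qed.

Lemma chamber_pairing_lt0 b x y : wall_vec alpha b -> C x -> C y ->
  pairing x b < 0 -> pairing y b < 0.
Proof.
move=> b_wall Cx Cy xb; rewrite lt_neqAle chamber_pairing_neq0 //= leNgt.
apply/negP => yb.
have C_conn : connected C by case: chamberC => w _ ->; exact: component_connected.
have /connected_intervalP img_itv := connected_continuous_connected C_conn
  (continuous_subspaceT (@continuous_pairing R I b)).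
have [u Cu /eqP] : ((fun z => pairing z b) @` C)%classic 0.
  by apply: (img_itv (pairing x b) (pairing y b)); [exists x|exists y|rewrite !ltW].
by apply/negP; exact: chamber_pairing_neq0.
Qed.

(* The sign of a wall pairing is constant on the chamber, hence extends to
   its closure wherever the pairing does not vanish. *)
Lemma chamber_closure_pairing_lt0E b z zb : wall_vec alpha b -> C z ->
  closure C zb -> pairing zb b != 0 -> (pairing z b < 0) = (pairing zb b < 0).
Proof.
move=> b_wall Cz clzb zb_neq0; apply/idP/idP => [zb_lt0|].
  rewrite lt_neqAle zb_neq0 /=.
  apply: (le0_closure (@continuous_pairing R I b) _ clzb) => y Cy.
  exact/ltW/(chamber_pairing_lt0 b_wall Cz Cy zb_lt0).
apply: contraLR; rewrite -!leNgt => z_ge0; rewrite -oppr_le0.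
apply: (le0_closure (f := fun y : {ptws I -> R} => - pairing y b)) clzb.
  by move=> y; apply: continuousN; exact: (@continuous_pairing R I b).
move=> y Cy; rewrite oppr_le0 leNgt; apply/negP => yb_lt0.
by have := chamber_pairing_lt0 b_wall Cy Cz yb_lt0; rewrite ltNge z_ge0.
Qed.

End Chamber.

Section ChamberC.
Variables (R : realType) (I : finType) (alpha : option I -> nat).
Variables (beta : I -> nat) (zetabar : {ptws I -> R}) (C : set {ptws I -> R}).
Variable zeta : {ptws I -> R}.
Hypothesis beta_wall : wall_vec alpha beta.
Hypothesis zetabar_gen : forall b, wall_vec alpha b -> wall b zetabar ->
  wall (R:=R) b = wall (R:=R) beta.
Hypothesis hC : chamber_C alpha beta zetabar C.
Hypothesis zeta_C : C zeta.

(* On the only wall through zetabar the sign is that of beta, i.e. negative. *)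
Lemma chamber_C_pairing_lt0E b : wall_vec alpha b ->
  (pairing zeta b < 0) = (pairing zetabar b <= 0).
Proof.
case: hC => chamberC clC C_neg b_wall.
have [zb_eq0|zb_neq0] := eqVneq (pairing zetabar b) 0.
  rewrite zb_eq0 lexx; case: beta_wall => -[j beta_j] _.
  apply: (wall_eq_pairing_lt0 (zetabar_gen b_wall zb_eq0) b_wall.1 beta_j).
  exact: C_neg.
rewrite le_eqVlt (negbTE zb_neq0) /=.
exact: (chamber_closure_pairing_lt0E chamberC b_wall zeta_C clC zb_neq0).
Qed.

Lemma chamber_C_pairing_gt0E b : wall_vec alpha b ->
  (0 < pairing zeta b) = (0 < pairing zetabar b).
Proof.
move=> b_wall; case: hC => chamberC _ _.
rewrite lt_def (chamber_pairing_neq0 chamberC) //= leNgt.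
by rewrite chamber_C_pairing_lt0E // -ltNge.
Qed.

End ChamberC.

Section SharpSubspaces.
Variables (K : fieldType) (R : realType) (I : finType) (d : nat) (beta : I -> nat).
Local Notation graded := (forall v : option (option I), 'M[K]_(dimU d beta v)).
Implicit Type S : graded.

Definition dimI S (i : I) : nat := \rank (S (Some (Some i))).

Definition codimI S (i : I) : nat := (d * beta i - dimI S i)%N.

Definition weight_sharp (zeta : I -> R) S : R :=
  \sum_v zeta_sharp d beta zeta v * (\rank (S v))%:R.

Definition clear_None S : graded :=
  fun v => if v is Some w return 'M[K]_(dimU d beta v) then S (Some w) else 0.

Lemma dimI_le S i : (dimI S i <= d * beta i)%N.
Proof. exact: rank_leq_col. Qed.

Lemma is_zero_subE S : is_zero_sub S <-> S None = 0 /\ forall i, dimI S i = 0%N.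
Proof.
split=> [S0 | [SN0 dimI0] [[i|]|] //].
- by split=> [|i]; rewrite /dimI ?S0 ?mxrank0.
- by apply/eqP; rewrite -mxrank_eq0; apply/eqP; exact: dimI0.
- exact: flatmx0.
Qed.

Lemma is_full_subE S :
  is_full_sub S <-> row_full (S None) /\ forall i, dimI S i = (d * beta i)%N.
Proof.
split=> [S_full | [SN_full dimI_full] [[i|]|] //].
- by split=> [|i]; [exact: S_full None | exact/eqP/(S_full (Some (Some i)))].
- by rewrite /row_full; apply/eqP; exact: dimI_full.
- by rewrite /row_full -leqn0 rank_leq_col.
Qed.

Lemma pairing_codimI (z : I -> R) S :
  pairing z (codimI S) = d%:R * pairing z beta - pairing z (dimI S).
Proof. by rewrite (pairing_subn z (dimI_le S)) pairing_natM. Qed.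

Lemma weight_sharpE zeta S : weight_sharp zeta S =
  pairing zeta (dimI S) - (\rank (S None))%:R * (d%:R * pairing zeta beta).
Proof.
rewrite /weight_sharp !sum_option /= mul0r add0r addrC -pairing_natM.
by rewrite mulNr mulrC.
Qed.

Lemma subrep_clear_None (A : finType) (src tgt : A -> option I) (i0 : I)
    (rho : qrep K (sh_src src) (sh_tgt tgt i0) (dimU d beta)) S :
  subrep rho S -> subrep rho (clear_None S).
Proof.
by move=> S_sub [a|] /=; [exact: S_sub (Some a) | rewrite mul0mx sub0mx].
Qed.

Variables (alpha : option I -> nat) (zetabar zeta : I -> R).
Hypothesis d_beta : forall i, (d * beta i <= alpha (Some i))%N.
Hypothesis zetabar_beta : pairing zetabar beta = 0.
Hypothesis zeta_lt0E : forall b, wall_vec alpha b ->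
  (pairing zeta b < 0) = (pairing zetabar b <= 0).
Hypothesis zeta_gt0E : forall b, wall_vec alpha b ->
  (0 < pairing zeta b) = (0 < pairing zetabar b).

Lemma wall_vec_le b :
  (exists i, b i != 0%N) -> (forall i, b i <= d * beta i)%N -> wall_vec alpha b.
Proof.
by move=> b_neq0 b_le; split=> // i; exact: leq_trans (b_le i) (d_beta i).
Qed.

Lemma weight_sharp_lt0_None0 S : S None = 0 -> ~ is_zero_sub S ->
  (weight_sharp zeta S < 0) = (pairing zetabar (dimI S) <= 0).
Proof.
move=> SN0 S_neq0.
have [i dimI_neq0] : exists i, dimI S i != 0%N.
  apply/existsP; apply: contra_notT S_neq0 => /existsPn dimI0.
  by apply/is_zero_subE; split=> // i; apply/eqP; have := dimI0 i; rewrite negbK.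
rewrite weight_sharpE SN0 mxrank0 mul0r subr0 zeta_lt0E //.
by apply: wall_vec_le (dimI_le S); exists i.
Qed.

Lemma weight_sharp_lt0_None_full S : row_full (S None) -> ~ is_full_sub S ->
  (weight_sharp zeta S < 0) = (pairing zetabar (dimI S) < 0).
Proof.
move=> SN_full S_nfull.
have [i dimI_ltn] : exists i, dimI S i != (d * beta i)%N.
  apply/existsP; apply: contra_notT S_nfull => /existsPn dimI_full.
  by apply/is_full_subE; split=> // i; apply/eqP; have := dimI_full i; rewrite negbK.
rewrite weight_sharpE (eqP SN_full) mulr1n mul1r -opprB -pairing_codimI oppr_lt0.
rewrite zeta_gt0E ?pairing_codimI ?zetabar_beta ?mulr0 ?sub0r ?oppr_gt0 //.
apply: wall_vec_le => [|j]; last exact: leq_subr.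
by exists i; rewrite /codimI subn_eq0 -ltnNge ltn_neqAle dimI_ltn dimI_le.
Qed.

End SharpSubspaces.

Theorem lemma4p1
  (R : realType)
  (I A : finType) (src tgt : A -> option I)
  (L : Type) (rels : L -> framed_rel (complex R) I A)
  (rels_wf : forall l, qrel_wf src tgt (framed_rel_lift (rels l)))
  (alpha : option I -> nat) (alpha_oo : alpha None = 1%N)
  (beta : I -> nat) (beta_wall : wall_vec alpha beta)
  (zetabar : {ptws I -> R}) (zetabar_beta : pairing zetabar beta = 0)
  (zetabar_gen : forall b, wall_vec alpha b -> wall b zetabar ->
                   wall (R:=R) b = wall (R:=R) beta)
  (C : set {ptws I -> R}) (hC : chamber_C alpha beta zetabar C)
  (i0 : I) (beta_i0 : beta i0 != 0%N)
  (d : nat) (d_ge1 : (1 <= d)%N)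
  (d_beta : forall i, (d * beta i <= alpha (Some i))%N)
  (zeta : {ptws I -> R}) (zeta_C : C zeta)
  (rho : qrep (complex R) (sh_src src) (sh_tgt tgt i0) (dimU d beta))
  (rho_rels : forall l, rep_sat rho (framed_rel_sharp (rels l))) :
  (* zeta^sharp-stable *)
  (forall S, subrep rho S -> ~ is_zero_sub S -> ~ is_full_sub S ->
     \sum_v zeta_sharp d beta zeta v * (\rank (S v))%:R < 0)
  <->
  ((* zetabar-semistable *)
   (forall S, subrep rho S ->
      \sum_i zetabar i * (\rank (S (Some (Some i))))%:R <= 0)
   /\
   (forall S, subrep rho S ->
      \sum_i zetabar i * (\rank (S (Some (Some i))))%:R = 0 ->
      row_full (S None) ->
      is_full_sub S)).
Proof.
have zeta_lt0E := chamber_C_pairing_lt0E beta_wall zetabar_gen hC zeta_C.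
have zeta_gt0E := chamber_C_pairing_gt0E beta_wall zetabar_gen hC zeta_C.
have weight_None0 := weight_sharp_lt0_None0 (K := complex R) d_beta zeta_lt0E.
have weight_None_full :=
  weight_sharp_lt0_None_full (K := complex R) d_beta zetabar_beta zeta_gt0E.
split=> [stable | [semistable zb0_full] S S_sub S_neq0 S_nfull].
  split=> [S S_sub | S S_sub S_zb0 SN_full].
    have [/is_zero_subE [_ dimI0] | S'_neq0] := pselect (is_zero_sub (clear_None S)).
      rewrite big1 // => i _.
      by rewrite (dimI0 i : \rank (S (Some (Some i))) = 0%N) mulr0.
    rewrite -(weight_None0 (clear_None S)) //.
    apply: stable (subrep_clear_None S_sub) S'_neq0 _ => /is_full_subE [].
    by rewrite /row_full mxrank0.
  change (pairing zetabar (dimI S) = 0) in S_zb0; apply: contrapT => S_nfull.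
  have S_neq0 : ~ is_zero_sub S.
    by move=> /is_zero_subE [SN0 _]; move: SN_full; rewrite SN0 /row_full mxrank0.
  by have := stable S S_sub S_neq0 S_nfull; rewrite weight_None_full // S_zb0 ltxx.
have [SN0 | SN_full] := col1_eq0_or_row_full (S None).
  by rewrite weight_None0 //; exact: semistable.
rewrite weight_None_full // lt_neqAle semistable // andbT.
by apply/eqP => S_zb0; exact/S_nfull/zb0_full.
Qed.
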